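(* Let $q\ge5$ be odd. The $\mathrm{Un}\Gamma$-lines (lines meeting the twisted cubic $\mathcal{C}$ in exactly one point and contained in no osculating plane) form two orbits under $G_q$, each of size $(q^3-q)/2$, namely $\{\ell_j\varphi:\varphi\in G_q\}$, $j=1,2$, where $P_0=P(0,0,0,1)$, $\ell_1$ is the line through $P_0$ and $P(1,0,1,0)$, $\ell_2$ is the line through $P_0$ and $P(1,0,\rho,0)$, and $\rho$ is a non-square in $\mathbb{F}_q$. Moreover, $\ell_1$ and $\ell_2$ are fixed by the same subgroup of $G_q$, of size $2$, each element of which has a matrix of the form $\begin{pmatrix}1&0&0&0\\0&d&0&0\\0&0&d^2&0\\0&0&0&d^3\end{pmatrix}$, $d\in\{1,-1\}$.
   Context: $\mathrm{PG}(3,q)$ has points $P(x_0,x_1,x_2,x_3)$; $\boldsymbol{\pi}(c_0,c_1,c_2,c_3)$ is the plane $c_0x_0+c_1x_1+c_2x_2+c_3x_3=0$. The twisted cubic is $\mathcal{C}=\{P(t^3,t^2,t,1):t\in\mathbb{F}_q\}\cup\{P(1,0,0,0)\}$; the osculating planes are $\boldsymbol{\pi}(1,-3t,3t^2,-t^3)$, $t\in\mathbb{F}_q$, and $\boldsymbol{\pi}(0,0,0,1)$. $G_q$ is the group of projectivities mapping $\mathcal{C}$ to itself; for $q\ge5$ its elements are $x\mapsto xM$ on row coordinate vectors, $M=\begin{pmatrix} a^3&a^2c&ac^2&c^3\\ 3a^2b&a^2d+2abc&bc^2+2acd&3c^2d\\ 3ab^2&b^2c+2abd&ad^2+2bcd&3cd^2\\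 b^3&b^2d&bd^2&d^3\end{pmatrix}$, $ad-bc\ne0$, up to scalar. *)

From HB Require Import structures.
From mathcomp Require Import all_boot all_order all_algebra.
Set Implicit Arguments. Unset Strict Implicit. Unset Printing Implicit Defensive.
Import GRing.Theory.
Local Open Scope ring_scope.

(* A subspace of F^4 (row vectors) is represented canonically by the square
   matrix <<A>>%MS (mathcomp's canonical generator of the row space of A).
   Points = canonical subspaces of rank 1, lines = canonical subspaces of rank 2. *)
Section TwistedCubic.
Variable F : finFieldType.

Definition rowv4 (x0 x1 x2 x3 : F) : 'rV[F]_4 :=
  \row_(j < 4) nth 0 [:: x0; x1; x2; x3] j.

Definition ppoint (x0 x1 x2 x3 : F) : 'M[F]_4 := <<rowv4 x0 x1 x2 x3>>%MS.

Definition line_through (u v : 'rV[F]_4) : 'M[F]_4 := <<col_mx u v>>%MS.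

Definition is_line (L : 'M[F]_4) : bool := (\rank L == 2)%N && (<<L>>%MS == L).

Definition cubic_pts : {set 'M[F]_4} :=
  [set ppoint (t ^+ 3) (t ^+ 2) t 1 | t : F] :|: [set ppoint 1 0 0 0].

Definition in_plane (L : 'M[F]_4) (c : 'rV[F]_4) : bool := L *m c^T == 0.

Definition osc (t : F) : 'rV[F]_4 := rowv4 1 (- (3%:R * t)) (3%:R * t ^+ 2) (- t ^+ 3).
Definition osc_inf : 'rV[F]_4 := rowv4 0 0 0 1.

Definition UnGamma : {set 'M[F]_4} :=
  [set L | [&& is_line L,
              #|[set P in cubic_pts | (P <= L)%MS]| == 1%N,
              [forall t : F, ~~ in_plane L (osc t)] &
              ~~ in_plane L osc_inf]].

Definition Mq (a b c d : F) : 'M[F]_4 :=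
  \matrix_(i < 4, j < 4) nth 0 (nth [::]
    [:: [:: a ^+ 3; a ^+ 2 * c; a * c ^+ 2; c ^+ 3];
        [:: 3%:R * a ^+ 2 * b; a ^+ 2 * d + 2%:R * a * b * c;
            b * c ^+ 2 + 2%:R * a * c * d; 3%:R * c ^+ 2 * d];
        [:: 3%:R * a * b ^+ 2; b ^+ 2 * c + 2%:R * a * b * d;
            a * d ^+ 2 + 2%:R * b * c * d; 3%:R * c * d ^+ 2];
        [:: b ^+ 3; b ^+ 2 * d; b * d ^+ 2; d ^+ 3]] i) j.

(* the projectivity x |-> x M, as its (faithful) action on subspaces of F^4;
   two invertible matrices induce the same map iff they are proportional, so
   this identifies projectivities with matrices up to scalars *)
Definition proj_of (M : 'M[F]_4) : {ffun 'M[F]_4 -> 'M[F]_4} :=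
  [ffun X : 'M[F]_4 => <<X *m M>>%MS].

Definition Gq : {set {ffun 'M[F]_4 -> 'M[F]_4}} :=
  [set f | [exists a : F, exists b : F, exists c : F, exists d : F,
              (a * d - b * c != 0) && (f == proj_of (Mq a b c d))]].

Definition Gorbit (L : 'M[F]_4) : {set 'M[F]_4} := [set (phi : {ffun 'M[F]_4 -> 'M[F]_4}) L | phi in Gq].

Definition Gstab (L : 'M[F]_4) : {set {ffun 'M[F]_4 -> 'M[F]_4}} :=
  [set phi in Gq | phi L == L].

Definition diagd (d : F) : 'M[F]_4 :=
  \matrix_(i < 4, j < 4) (if i == j then d ^+ i else 0).

End TwistedCubic.

From HB Require Import structures.
From mathcomp Require Import all_boot all_order all_algebra all_field.
From mathcomp Require Import ring zify.
Set Implicit Arguments. Unset Strict Implicit. Unset Printing Implicit Defensive.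
Import GRing.Theory.
Local Open Scope ring_scope.

(* G_q acts on the twisted cubic C as PGL(2,q) acts on the projective line, so it
   is transitive on C.  Moving the unique point of C on an UnGamma-line L to
   P0 = P(0,0,0,1), whose osculating plane is x0 = 0, turns L into the span of P0
   and a point P(1,x,y,0), and this line meets C a second time exactly when
   y = x^2.  So the UnGamma-lines correspond bijectively to the triples (t,x,y)
   with y <> x^2, t being the parameter of the point of L on C.  The image of
   l_r = <P0, P(1,0,r,0)> under M(a,b,c,d) has y - x^2 = r (d^2/(ad-bc))^2, or
   r (b/c)^2 if d = 0, and every triple with y - x^2 in r.(F^x)^2 arises: the orbit
   of l_r is cut out by the square class of y - x^2.  For odd q there are two
   square classes, of size (q-1)/2 each, giving two orbits of size (q+1)q(q-1)/2;
   and M(a,b,c,d) fixes l_r exactly when b = c = 0 and d = a or d = -a. *)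

Lemma natr2_neq0_odd_card (F : finFieldType) : odd #|F| -> (2%:R : F) != 0.
Proof.
move=> oddF; apply/negP => /eqP two0.
have char2 : 2%N \in [pchar F] by rewrite inE two0 eqxx.
move: oddF (finNzRing_gt1 F); rewrite (card_pprimeChar char2) oddX orbF.
by move=> /eqP ->.
Qed.

Lemma cube_subn_half q k : (k * 2)%N = q.-1 -> (0 < q)%N ->
  (q.+1 * (q * k))%N = ((q ^ 3 - q) %/ 2)%N.
Proof.
move=> kq q_gt0; have -> : q = (k * 2).+1 by lia.
have -> : ((k * 2).+1 ^ 3 - (k * 2).+1 = (k * 2).+2 * ((k * 2).+1 * k) * 2)%N.
  by rewrite !expnS expn0 muln1; nia.
by rewrite mulnK.
Qed.

Section TwistedCubicLines.
Variable F : finFieldType.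
Implicit Types (a b c d e r s x y : F) (t : option F).

Ltac case_ord4 i := case: i => [[|[|[|[|?]]]] ?] //=.
Ltac field_hyps := field; rewrite ?oner_neq0 ?andbT; try (repeat (apply/andP; split); assumption).

Lemma rowv4_eta (w : 'rV[F]_4) : w = rowv4 (w 0 0) (w 0 1) (w 0 2) (w 0 3).
Proof. by apply/rowP => j; rewrite mxE; case_ord4 j; congr (w _ _); apply: val_inj. Qed.

Lemma rowv4_lin a b x0 x1 x2 x3 y0 y1 y2 y3 :
  a *: rowv4 x0 x1 x2 x3 + b *: rowv4 y0 y1 y2 y3 =
  rowv4 (a * x0 + b * y0) (a * x1 + b * y1) (a * x2 + b * y2) (a * x3 + b * y3).
Proof. by apply/rowP => j; rewrite !mxE; case_ord4 j. Qed.

Lemma sum4 (f : 'I_4 -> F) : \sum_(i < 4) f i = f 0 + f 1 + f 2 + f 3.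
Proof. rewrite !big_ord_recr big_ord0 /= add0r; by congr (_ + _ + _ + _); congr f; apply: val_inj. Qed.

Lemma rowv4_mul z0 z1 z2 z3 (M : 'M[F]_4) :
  rowv4 z0 z1 z2 z3 *m M =
  rowv4 (z0 * M 0 0 + z1 * M 1 0 + z2 * M 2 0 + z3 * M 3 0)
        (z0 * M 0 1 + z1 * M 1 1 + z2 * M 2 1 + z3 * M 3 1)
        (z0 * M 0 2 + z1 * M 1 2 + z2 * M 2 2 + z3 * M 3 2)
        (z0 * M 0 3 + z1 * M 1 3 + z2 * M 2 3 + z3 * M 3 3).
Proof.
apply/rowP => j; rewrite !mxE sum4 !mxE /=.
by case_ord4 j; congr (_ * M _ _ + _ * M _ _ + _ * M _ _ + _ * M _ _); apply: val_inj.
Qed.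

Lemma rowv4_mul_tr z0 z1 z2 z3 c0 c1 c2 c3 :
  rowv4 z0 z1 z2 z3 *m (rowv4 c0 c1 c2 c3)^T = (z0 * c0 + z1 * c1 + z2 * c2 + z3 * c3)%:M.
Proof. by apply/matrixP => i j; rewrite !ord1 !mxE sum4 !mxE /= mulr1n. Qed.

Lemma mulmx_Mq a b c d a' b' c' d' :
  Mq a b c d *m Mq a' b' c' d' =
  Mq (a * a' + c * b') (b * a' + d * b') (a * c' + c * d') (b * c' + d * d').
Proof. by apply/matrixP => i j; rewrite !mxE sum4 !mxE /=; case_ord4 i; case_ord4 j; ring. Qed.

Lemma Mq1 : Mq 1 0 0 1 = 1%:M :> 'M[F]_4.
Proof. by apply/matrixP => i j; rewrite !mxE; case_ord4 i; case_ord4 j; ring. Qed.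

Lemma row_free_Mq a b c d : a * d - b * c != 0 -> row_free (Mq a b c d).
Proof.
move=> det_neq0; rewrite row_free_unit.
suff: Mq a b c d *m Mq (d / (a * d - b * c)) (- b / (a * d - b * c))
         (- c / (a * d - b * c)) (a / (a * d - b * c)) = 1%:M by case/mulmx1_unit.
by rewrite mulmx_Mq -Mq1; congr Mq; field.
Qed.

Lemma GqP (phi : {ffun 'M[F]_4 -> 'M[F]_4}) :
  reflect (exists a b c d, a * d - b * c != 0 /\ phi = proj_of (Mq a b c d))
          (phi \in Gq F).
Proof.
rewrite inE; apply: (iffP existsP).
  by case=> a /existsP [b /existsP [c /existsP [d /andP [? /eqP ->]]]]; exists a, b, c, d.
case=> a [b [c [d [? ->]]]]; exists a; apply/existsP; exists b; apply/existsP; exists c.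
by apply/existsP; exists d; apply/andP.
Qed.

Lemma proj_ofZ k (M : 'M[F]_4) : k != 0 -> proj_of (k *: M) = proj_of M.
Proof.
move=> k_neq0; apply/ffunP => X; rewrite !ffunE; apply/genmxP.
by rewrite -scalemxAr; apply/eqmxP/eqmx_scale.
Qed.

(** * Normal form of the UnGamma-lines *)

Definition cubic_vec t : 'rV[F]_4 :=
  if t is Some s then rowv4 (s ^+ 3) (s ^+ 2) s 1 else rowv4 1 0 0 0.
Definition cubic_pt t : 'M[F]_4 := <<cubic_vec t>>%MS.
Definition osc_vec t : 'rV[F]_4 := if t is Some s then osc s else osc_inf F.

Lemma cubic_ptsP P : reflect (exists t, P = cubic_pt t) (P \in cubic_pts F).
Proof.
rewrite inE; apply: (iffP orP).
  case=> [/imsetP [s _ ->]|]; first by exists (Some s).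
  by rewrite inE => /eqP ->; exists None.
by case=> [[s|] ->]; [left; apply/imsetP; exists s | right; rewrite inE].
Qed.

Lemma cubic_pt_in t : cubic_pt t \in cubic_pts F.
Proof. by apply/cubic_ptsP; exists t. Qed.

Lemma cubic_pt_inj t t' : cubic_pt t = cubic_pt t' -> t = t'.
Proof.
move=> /genmxP /andP [/sub_rVP [k /rowP k_t] _].
case: t t' k_t => [s|] [s'|] k_t //.
- by move: (k_t 3) (k_t 2); rewrite !mxE /= mulr1 => <-; rewrite mul1r => ->.
- by move: (k_t 3); rewrite !mxE /= mulr0 => /eqP; rewrite oner_eq0.
- by move: (k_t 3) (k_t 0); rewrite !mxE /= mulr1 => <-; rewrite mul0r => /eqP; rewrite oner_eq0.
Qed.

Definition shift_mx t : 'M[F]_4 := if t is Some s then Mq 1 s 0 1 else Mq 0 1 1 0.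
Definition shift_mxV t : 'M[F]_4 := if t is Some s then Mq 1 (- s) 0 1 else Mq 0 1 1 0.

Lemma shift_mxK t : shift_mx t *m shift_mxV t = 1%:M.
Proof. by rewrite -Mq1; case: t => [s|] /=; rewrite mulmx_Mq; congr Mq; ring. Qed.

Lemma shift_mxVK t : shift_mxV t *m shift_mx t = 1%:M.
Proof. by rewrite -Mq1; case: t => [s|] /=; rewrite mulmx_Mq; congr Mq; ring. Qed.

Lemma row_free_shift_mxV t : row_free (shift_mxV t).
Proof. by rewrite row_free_unit; case: (mulmx1_unit (shift_mxVK t)). Qed.

Lemma sub_mulmx_shift_mx m (A : 'M[F]_(m, 4)) (w : 'rV[F]_4) t :
  (w <= A *m shift_mx t)%MS = (w *m shift_mxV t <= A)%MS.
Proof. by rewrite -(submxMfree _ _ (row_free_shift_mxV t)) -mulmxA shift_mxK mulmx1. Qed.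

Definition e0 : 'rV[F]_4 := rowv4 1 0 0 0.
Definition e3 : 'rV[F]_4 := rowv4 0 0 0 1.

Lemma e3_shift_mx t : e3 *m shift_mx t = cubic_vec t.
Proof. by case: t => [s|]; rewrite rowv4_mul !mxE /=; congr rowv4; ring. Qed.

Lemma cubic_vec_shift_mxV t : cubic_vec t *m shift_mxV t = e3.
Proof. by case: t => [s|]; rewrite rowv4_mul !mxE /=; congr rowv4; ring. Qed.

Lemma cubic_vec_shift_mxV_Some s s' :
  cubic_vec (Some s') *m shift_mxV (Some s) = cubic_vec (Some (s' - s)).
Proof. by rewrite rowv4_mul !mxE /=; congr rowv4; ring. Qed.

Lemma cubic_vec_shift_mxV_inf s : cubic_vec None *m shift_mxV (Some s) = cubic_vec None.
Proof. by rewrite rowv4_mul !mxE /=; congr rowv4; ring. Qed.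

Lemma cubic_vec_shift_mxV_swap s :
  cubic_vec (Some s) *m shift_mxV None = rowv4 1 s (s ^+ 2) (s ^+ 3).
Proof. by rewrite rowv4_mul !mxE /=; congr rowv4; ring. Qed.

Lemma shift_mxV_e0 t : shift_mxV t *m e0^T = (osc_vec t)^T.
Proof.
apply/matrixP => i j; rewrite !ord1 !mxE sum4 !mxE /e0 /=.
by case: t => [s|]; case_ord4 i; rewrite !mxE /=; ring.
Qed.

Lemma shift_mx_osc t : shift_mx t *m (osc_vec t)^T = e0^T.
Proof. by rewrite -shift_mxV_e0 mulmxA shift_mxK mul1mx. Qed.

Definition P0line x y : 'M[F]_(1 + 1, 4) := col_mx e3 (rowv4 1 x y 0).

Lemma sub_P0line (w : 'rV[F]_4) x y :
  (w <= P0line x y)%MS = (w 0 1 == x * w 0 0) && (w 0 2 == y * w 0 0).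
Proof.
apply/idP/andP.
  rewrite -addsmxE => /sub_addsmxP [[k1 k2] /= ->].
  rewrite (mx11_scalar k1) (mx11_scalar k2) !mul_scalar_mx rowv4_lin !mxE /=.
  by split; apply/eqP; ring.
case=> /eqP w1 /eqP w2; rewrite -addsmxE; apply/sub_addsmxP.
exists ((w 0 3)%:M, (w 0 0)%:M); rewrite /= !mul_scalar_mx rowv4_lin.
by rewrite {1}(rowv4_eta w) w1 w2; congr rowv4; ring.
Qed.

Lemma rank_P0line x y : \rank (P0line x y) = 2%N.
Proof.
have e3_lt : (e3 < P0line x y)%MS.
  rewrite ltmxE col_mx_sub submx_refl -addsmxE addsmxSl /=.
  by apply/sub_rVP => -[k /rowP /(_ 0)]; rewrite !mxE /= mulr0 => /eqP; rewrite oner_eq0.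
apply/eqP; rewrite eqn_leq rank_leq_row /=.
by apply: leq_trans (rank_ltmx e3_lt); rewrite rank_rV; case: eqP => // /rowP /(_ 3);
  rewrite !mxE /= => /eqP; rewrite oner_eq0.
Qed.

Definition std_line t x y : 'M[F]_4 := <<P0line x y *m shift_mx t>>%MS.

Lemma cubic_pt_sub_std_line t' t x y : y != x ^+ 2 ->
  (cubic_pt t' <= std_line t x y)%MS = (t' == t).
Proof.
move=> y_neq; rewrite /cubic_pt /std_line !genmxE sub_mulmx_shift_mx.
case: t => [s|]; case: t' => [s'|].
- rewrite cubic_vec_shift_mxV_Some sub_P0line !mxE /=.
  have [->|s'_neq] := eqVneq s' s; first by rewrite subrr !expr0n /= !mulr0 !eqxx.
  rewrite (inj_eq (@Some_inj _)) (negbTE s'_neq).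
  have u_neq0 : s' - s != 0 by rewrite subr_eq0.
  apply/negbTE/negP => /andP [/eqP h1 /eqP h2]; apply: (negP y_neq); apply/eqP.
  (* [y - x^2] is a combination of the two membership equations [h1] and [h2]. *)
  have -> : y = x ^+ 2 - ((s' - s) - y * (s' - s) ^+ 3) / (s' - s) ^+ 3
      + ((s' - s) ^+ 2 - x * (s' - s) ^+ 3) * (x * (s' - s) + 1) / (s' - s) ^+ 4 by field.
  by rewrite -h1 -h2 !subrr !mul0r subr0 addr0.
- rewrite cubic_vec_shift_mxV_inf sub_P0line !mxE /= !mulr1.
  by apply/negbTE/negP => /andP [/eqP x0 /eqP y0]; rewrite -x0 -y0 expr0n eqxx in y_neq.
- rewrite cubic_vec_shift_mxV_swap sub_P0line !mxE /= !mulr1.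
  by apply/negbTE/negP => /andP [/eqP xs /eqP ys]; rewrite -xs -ys eqxx in y_neq.
- by rewrite cubic_vec_shift_mxV sub_P0line !mxE /= !mulr0 !eqxx.
Qed.

Lemma std_line_cubic_pts t x y : y != x ^+ 2 ->
  [set P in cubic_pts F | (P <= std_line t x y)%MS] = [set cubic_pt t].
Proof.
move=> y_neq; apply/setP => P; rewrite inE [in RHS]inE; apply/andP/eqP.
  by case=> /cubic_ptsP [t' ->]; rewrite cubic_pt_sub_std_line // => /eqP ->.
by move=> ->; rewrite cubic_pt_in cubic_pt_sub_std_line.
Qed.

Lemma is_line_std_line t x y : is_line (std_line t x y).
Proof.
rewrite /is_line genmx_id eqxx andbT mxrank_gen mxrankMfree ?rank_P0line //.
by rewrite row_free_unit; case: (mulmx1_unit (shift_mxK t)).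
Qed.

Lemma not_in_plane (L : 'M[F]_4) (w c : 'rV[F]_4) :
  (w <= L)%MS -> (w *m c^T) 0 0 != 0 -> ~~ in_plane L c.
Proof.
case/submxP=> D ->; apply: contra => /eqP LcT0.
by rewrite -mulmxA LcT0 mulmx0 mxE.
Qed.

Lemma std_line_not_osc t' t x y : ~~ in_plane (std_line t x y) (osc_vec t').
Proof.
have [->|t'_neq] := eqVneq t' t.
  apply: (@not_in_plane _ (rowv4 1 x y 0 *m shift_mx t)).
    by rewrite /std_line genmxE submxMr // -addsmxE addsmxSr.
  by rewrite -mulmxA shift_mx_osc /e0 rowv4_mul_tr mxE /= !mulr0 !addr0 mulr1 oner_eq0.
apply: (@not_in_plane _ (cubic_vec t)).
  by rewrite /std_line genmxE -e3_shift_mx submxMr // -addsmxE addsmxSl.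
case: t t' t'_neq => [s|] [s'|] t'_neq; rewrite /= ?/osc ?/osc_inf rowv4_mul_tr mxE /=.
- have -> : s ^+ 3 * 1 + s ^+ 2 * - (3%:R * s') + s * (3%:R * s' ^+ 2) + 1 * - s' ^+ 3
     = (s - s') ^+ 3 by ring.
  by rewrite expf_neq0 // subr_eq0; apply: contra t'_neq => /eqP ->.
- by rewrite !mulr0 !mulr1 !add0r oner_eq0.
- by rewrite !mulr1 !mul0r !addr0 oner_eq0.
- by rewrite eqxx in t'_neq.
Qed.

Lemma std_line_UnGamma t x y : y != x ^+ 2 -> std_line t x y \in UnGamma F.
Proof.
move=> y_neq; rewrite inE is_line_std_line std_line_cubic_pts // cards1 eqxx /=.
rewrite (std_line_not_osc None) andbT.
by apply/forallP => s; apply: (std_line_not_osc (Some s)).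
Qed.

Lemma P0line_of_rank2 (B : 'M[F]_4) : \rank B = 2%N -> (e3 <= B)%MS ->
  B *m e0^T != 0 -> exists x y, (P0line x y == B)%MS.
Proof.
move=> rankB e3B B_e0.
have /existsP [i w0_neq0] : [exists i, row i B 0 0 != 0].
  apply: contraNT B_e0 => /existsPn w0; apply/eqP/row_matrixP => i.
  rewrite row_mul row0 (rowv4_eta (row i B)) /e0 rowv4_mul_tr (eqP (negbNE (w0 i))).
  by rewrite !mulr0 !mul0r !addr0 (mx11_scalar 0) mxE.
set w := row i B; have wB : (w <= B)%MS := row_sub i B.
exists (w 0 1 / w 0 0), (w 0 2 / w 0 0).
have vB : (rowv4 1 (w 0 1 / w 0 0) (w 0 2 / w 0 0) 0 <= B)%MS.
  have -> : rowv4 1 (w 0 1 / w 0 0) (w 0 2 / w 0 0) 0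
          = (w 0 0)^-1 *: w + (- (w 0 3 / w 0 0)) *: e3.
    by rewrite [X in _ *: X + _](rowv4_eta w) /e3 rowv4_lin; congr rowv4; field.
  by rewrite addmx_sub ?scalemx_sub.
have sub : (P0line (w 0 1 / w 0 0) (w 0 2 / w 0 0) <= B)%MS by rewrite col_mx_sub e3B.
by rewrite -(mxrank_leqif_eq sub) rankB rank_P0line.
Qed.

Lemma std_line_square_meets t x :
  exists2 t', t' != t & (cubic_pt t' <= std_line t x (x ^+ 2))%MS.
Proof.
suff [t' t'_neq t'L] : exists2 t', t' != t &
    (cubic_vec t' *m shift_mxV t <= P0line x (x ^+ 2))%MS.
  by exists t'; rewrite // /cubic_pt /std_line !genmxE sub_mulmx_shift_mx.
case: t => [s|]; last first.
  by exists (Some x); rewrite // cubic_vec_shift_mxV_swap sub_P0line !mxE /= !mulr1 !eqxx.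
have [x0|x_neq0] := eqVneq x 0.
  by exists None; rewrite // cubic_vec_shift_mxV_inf sub_P0line !mxE /= x0 expr0n !mul0r eqxx.
exists (Some (s + x^-1)).
  by rewrite (inj_eq (@Some_inj _)) -subr_eq0 addrC addKr invr_eq0.
rewrite cubic_vec_shift_mxV_Some sub_P0line !mxE /= [s + _]addrC addrK.
by apply/andP; split; apply/eqP; field.
Qed.

Lemma UnGamma_std_line L : L \in UnGamma F ->
  exists t x y, y != x ^+ 2 /\ L = std_line t x y.
Proof.
rewrite inE => /and4P [/andP [/eqP rankL /eqP genL] /cards1P [P meetL] oscL osc_infL].
have : P \in [set P in cubic_pts F | (P <= L)%MS] by rewrite meetL set11.
rewrite inE => /andP [/cubic_ptsP [t ?] tL]; subst P.
have e3B : (e3 <= L *m shift_mxV t)%MS.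
  by rewrite -(cubic_vec_shift_mxV t) submxMr // -genmxE.
have rankB : \rank (L *m shift_mxV t) = 2%N by rewrite mxrankMfree ?row_free_shift_mxV.
have B_e0 : L *m shift_mxV t *m e0^T != 0.
  have : ~~ in_plane L (osc_vec t).
    by case: t {meetL tL e3B rankB} => [s|] //=; apply: (forallP oscL).
  by apply: contra => /eqP LV0; rewrite /in_plane -shift_mxV_e0 mulmxA LV0.
have [x [y P0lineE]] := P0line_of_rank2 rankB e3B B_e0.
have LE : L = std_line t x y.
  rewrite -genL /std_line; apply/genmxP/eqmxP.
  apply: eqmx_sym; apply: eqmx_trans (eqmxMr _ (eqmxP P0lineE)) _.
  by rewrite -mulmxA shift_mxVK mulmx1; apply: eqmx_refl.
exists t, x, y; split => //; apply/eqP => y_sq; move: LE; rewrite y_sq => LE.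
have [t' t'_neq t'L] := std_line_square_meets t x.
have : cubic_pt t' \in [set P in cubic_pts F | (P <= L)%MS] by rewrite inE cubic_pt_in LE.
by rewrite meetL inE => /eqP /cubic_pt_inj /eqP; rewrite (negbTE t'_neq).
Qed.

Lemma std_line_inj t x y t' x' y' : y != x ^+ 2 -> y' != x' ^+ 2 ->
  std_line t x y = std_line t' x' y' -> [/\ t = t', x = x' & y = y'].
Proof.
move=> y_neq y'_neq E.
have : (cubic_pt t <= std_line t' x' y')%MS by rewrite -E cubic_pt_sub_std_line.
rewrite cubic_pt_sub_std_line // => /eqP t_eq; subst t'.
have : (rowv4 1 x y 0 *m shift_mx t <= std_line t x' y')%MS.
  by rewrite -E /std_line genmxE submxMr // -addsmxE addsmxSr.
rewrite /std_line genmxE sub_mulmx_shift_mx -mulmxA shift_mxK mulmx1 sub_P0line !mxE /= !mulr1.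
by case/andP => /eqP <- /eqP <-.
Qed.

(** * The orbit and the stabiliser of l_r *)

Definition ell r : 'M[F]_4 := line_through e3 (rowv4 1 0 r 0).

Lemma ell_std_line r : ell r = std_line (Some 0) 0 r.
Proof. by rewrite /std_line /= Mq1 mulmx1. Qed.

Lemma proj_of_ell (M : 'M[F]_4) r : proj_of M (ell r) = <<P0line 0 r *m M>>%MS.
Proof. by rewrite ffunE; apply/genmxP/eqmxP/eqmxMr/genmxE. Qed.

Lemma P0line_mul_Mq r a c d : a != 0 -> d != 0 ->
  (P0line 0 r *m Mq a 0 c d == P0line (c / a) ((c ^+ 2 + r * d ^+ 2) / a ^+ 2))%MS.
Proof.
move=> a_neq0 d_neq0.
have sub : (P0line 0 r *m Mq a 0 c d <= P0line (c / a) ((c ^+ 2 + r * d ^+ 2) / a ^+ 2))%MS.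
  rewrite mul_col_mx col_mx_sub /e3 !rowv4_mul !sub_P0line !mxE /=.
  by apply/andP; split; apply/andP; split; apply/eqP; field.
rewrite -(mxrank_leqif_eq sub) mxrankMfree ?rank_P0line //.
by apply: row_free_Mq; rewrite mul0r subr0 mulf_neq0.
Qed.

Lemma proj_Mq_ell r a b c d : a * d - b * c != 0 -> d != 0 ->
  proj_of (Mq a b c d) (ell r) =
  std_line (Some (b / d)) (c * d / (a * d - b * c))
           ((c ^+ 2 + r * d ^+ 2) * d ^+ 2 / (a * d - b * c) ^+ 2).
Proof.
move=> det_neq0 d_neq0; rewrite proj_of_ell.
have -> : Mq a b c d = Mq ((a * d - b * c) / d) 0 c d *m shift_mx (Some (b / d)).
  by rewrite /= mulmx_Mq; congr Mq; field_hyps.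
rewrite mulmxA /std_line; apply/genmxP/eqmxP/eqmxMr/eqmxP.
have -> : c * d / (a * d - b * c) = c / ((a * d - b * c) / d) by field_hyps.
have -> : (c ^+ 2 + r * d ^+ 2) * d ^+ 2 / (a * d - b * c) ^+ 2
        = (c ^+ 2 + r * d ^+ 2) / ((a * d - b * c) / d) ^+ 2 by field_hyps.
by apply: P0line_mul_Mq => //; rewrite mulf_neq0 ?invr_eq0.
Qed.

Lemma proj_Mq0_ell r a b c : b != 0 -> c != 0 ->
  proj_of (Mq a b c 0) (ell r) = std_line None (a / c) ((a ^+ 2 + r * b ^+ 2) / c ^+ 2).
Proof.
move=> b_neq0 c_neq0; rewrite proj_of_ell.
have -> : Mq a b c 0 = Mq c 0 a b *m shift_mx None by rewrite /= mulmx_Mq; congr Mq; ring.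
rewrite mulmxA /std_line; apply/genmxP/eqmxP/eqmxMr/eqmxP.
exact: P0line_mul_Mq.
Qed.

Definition sqclass r : {set F} := [set r * s ^+ 2 | s in predC1 0].

Definition std_params r : {set option F * (F * F)} :=
  [set u | u.2.2 - u.2.1 ^+ 2 \in sqclass r].

Definition std_line_of (u : option F * (F * F)) : 'M[F]_4 := std_line u.1 u.2.1 u.2.2.

Lemma sqclassP r z : reflect (exists2 s, s != 0 & z = r * s ^+ 2) (z \in sqclass r).
Proof. by apply: (iffP imsetP) => -[s]; rewrite ?inE => s_neq0 ->; exists s; rewrite ?inE. Qed.

Lemma sqclass_sub_neq r x y : r != 0 -> y - x ^+ 2 \in sqclass r -> y != x ^+ 2.
Proof.
move=> r_neq0 /sqclassP [s s_neq0 E].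
by rewrite -subr_eq0 E mulf_neq0 ?expf_neq0.
Qed.

Lemma Gorbit_ell r : r != 0 -> Gorbit (ell r) = std_line_of @: std_params r.
Proof.
move=> r_neq0; apply/setP => L; apply/imsetP/imsetP.
  case=> phi /GqP [a [b [c [d [det_neq0 ->]]]]] ->.
  have [d0|d_neq0] := eqVneq d 0.
    subst d; move: det_neq0; rewrite mulr0 sub0r oppr_eq0 mulf_eq0 negb_or.
    case/andP=> b_neq0 c_neq0.
    exists (None, (a / c, (a ^+ 2 + r * b ^+ 2) / c ^+ 2)); last by rewrite proj_Mq0_ell.
    by rewrite inE; apply/sqclassP; exists (b / c); rewrite ?mulf_neq0 ?invr_eq0 //=; field_hyps.
  exists (Some (b / d), (c * d / (a * d - b * c),
          (c ^+ 2 + r * d ^+ 2) * d ^+ 2 / (a * d - b * c) ^+ 2)); last by rewrite proj_Mq_ell.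
  rewrite inE; apply/sqclassP; exists (d ^+ 2 / (a * d - b * c)).
    by rewrite mulf_neq0 ?invr_eq0 ?expf_neq0.
  by rewrite /=; field_hyps.
case=> [[t [x y]]]; rewrite inE => /sqclassP [s s_neq0 /= yE] ->; rewrite /std_line_of /=.
have {yE}-> : y = x ^+ 2 + r * s ^+ 2 by rewrite -yE; ring.
case: t => [t|].
  have det : (1 + x * t) * s - s * t * x = s by ring.
  exists (proj_of (Mq (1 + x * t) (s * t) x s)).
    by apply/GqP; exists (1 + x * t), (s * t), x, s; rewrite det.
  by rewrite proj_Mq_ell ?det //; congr std_line; try congr Some; field_hyps.
exists (proj_of (Mq x s 1 0)).
  by apply/GqP; exists x, s, 1, 0; rewrite mulr0 sub0r mulr1 oppr_eq0.
by rewrite proj_Mq0_ell ?oner_eq0 //; congr std_line; field_hyps.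
Qed.

Lemma Mq_diagd a e : Mq a 0 0 (e * a) = a ^+ 3 *: diagd e.
Proof. by apply/matrixP => i j; rewrite !mxE; case_ord4 i; case_ord4 j; ring. Qed.

Lemma diagd_Mq e : diagd e = Mq 1 0 0 e.
Proof. by rewrite -[e in RHS]mulr1 Mq_diagd expr1n scale1r. Qed.

Lemma diagd_in_Gq e : e != 0 -> proj_of (diagd e) \in Gq F.
Proof. by move=> e_neq0; apply/GqP; exists 1, 0, 0, e; rewrite diagd_Mq mul1r mul0r subr0. Qed.

Lemma diagd_fix_ell r e : e ^+ 2 = 1 -> proj_of (diagd e) (ell r) = ell r.
Proof.
move=> e2; have e_neq0 : e != 0 by apply: contra_eq_neq e2 => ->; rewrite expr0n eq_sym oner_neq0.
rewrite diagd_Mq proj_Mq_ell ?mul1r ?mul0r ?subr0 // ell_std_line.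
by congr std_line; rewrite e2; field_hyps.
Qed.

Lemma Mq_fix_ell r a b c d : r != 0 -> a * d - b * c != 0 ->
  proj_of (Mq a b c d) (ell r) = ell r -> [/\ b = 0, c = 0 & (d = a \/ d = - a)].
Proof.
move=> r_neq0 det_neq0.
have r_nsq : r != 0 ^+ 2 by rewrite expr0n.
have [d0|d_neq0] := eqVneq d 0.
  subst d; move: det_neq0; rewrite mulr0 sub0r oppr_eq0 mulf_eq0 negb_or.
  case/andP=> b_neq0 c_neq0; rewrite proj_Mq0_ell // ell_std_line => /std_line_inj [] //.
  apply: (sqclass_sub_neq r_neq0); apply/sqclassP.
  by exists (b / c); rewrite ?mulf_neq0 ?invr_eq0 //; field_hyps.
rewrite proj_Mq_ell // ell_std_line => /std_line_inj [] //.
  apply: (sqclass_sub_neq r_neq0); apply/sqclassP.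
  exists (d ^+ 2 / (a * d - b * c)); first by rewrite mulf_neq0 ?invr_eq0 ?expf_neq0.
  by field_hyps.
move=> [/eqP]; rewrite mulf_eq0 invr_eq0 (negbTE d_neq0) orbF => /eqP b0; subst b.
move=> /eqP; rewrite !mulf_eq0 invr_eq0 (negbTE det_neq0) (negbTE d_neq0) !orbF => /eqP c0.
subst c => r_eq; have a_neq0 : a != 0 by apply: contraNneq det_neq0 => ->; rewrite !mul0r subr0.
have : (d == a) || (d == - a).
  by rewrite -eqf_sqr; apply/eqP/(mulfI r_neq0); rewrite -[in RHS]r_eq; field_hyps.
by case/orP => /eqP; split => //; [left | right].
Qed.

Lemma Gstab_ell r : r != 0 -> Gstab (ell r) = [set proj_of (diagd 1); proj_of (diagd (-1))].
Proof.
move=> r_neq0; apply/setP => phi; rewrite inE in_set2; apply/andP/orP.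
  case=> /GqP [a [b [c [d [det_neq0 ->]]]]] /eqP /(Mq_fix_ell r_neq0 det_neq0) [b0 c0 da]; subst b c.
  have a_neq0 : a != 0 by apply: contraNneq det_neq0 => ->; rewrite !mul0r subr0.
  case: da => ->; [left | right]; apply/eqP.
    by rewrite -[X in Mq _ _ _ X]mul1r Mq_diagd proj_ofZ ?expf_neq0.
  by rewrite -[X in Mq _ _ _ X]mulN1r Mq_diagd proj_ofZ ?expf_neq0.
by case=> /eqP ->; split; rewrite ?diagd_in_Gq ?diagd_fix_ell ?oppr_eq0 ?oner_eq0 ?sqrrN ?expr1n.
Qed.

(** * Square classes and counting *)

Lemma card_sqclass1 : odd #|F| -> (#|sqclass 1%R| * 2)%N = #|F|.-1.
Proof.
move=> oddF; have two_neq0 := natr2_neq0_odd_card oddF.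
have sq1E : sqclass 1 = [set s ^+ 2 | s in predC1 0] by apply: eq_imset => s; rewrite mul1r.
rewrite -(cardC1 (0 : F)) -[#|predC1 _|]sum1_card.
rewrite (partition_big_imset (fun s : F => s ^+ 2)) /= -sq1E.
rewrite -sum_nat_const; apply: eq_bigr => _ /imsetP [s s_neq0 ->].
have s_neqN : s != - s.
  apply: contra two_neq0 => /eqP s_eq; rewrite -(mulfI s_neq0 (_ : s * 2%:R = s * 0)) //.
  by rewrite mulr0 mulr_natr mulr2n {1}s_eq addNr.
rewrite sum1_card (@eq_card _ _ [set s; - s]) ?cards2 ?s_neqN // => u.
rewrite -[u \in _]/((u != 0) && (u ^+ 2 == 1 * s ^+ 2)) !inE mul1r eqf_sqr. have [->|] //= := eqVneq u 0.
by rewrite eq_sym (negPf s_neq0) eq_sym oppr_eq0 (negPf s_neq0).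
Qed.

Lemma card_sqclass r : r != 0 -> #|sqclass r| = #|sqclass 1|.
Proof.
move=> r_neq0; suff -> : sqclass r = ( *%R r) @: sqclass 1 by rewrite card_imset //; apply: mulfI.
by rewrite /sqclass -imset_comp; apply: eq_imset => s /=; rewrite mul1r.
Qed.

Lemma sqclass_disjoint rho : ~ (exists x, x ^+ 2 = rho) -> [disjoint sqclass 1 & sqclass rho].
Proof.
move=> rho_nsq; apply/pred0P => z /=; apply/negP => /andP [/sqclassP [s _ ->]].
case/sqclassP => u u_neq0; rewrite mul1r => E; apply: rho_nsq; exists (s / u).
by rewrite expr_div_n E mulrK // unitfE expf_neq0.
Qed.

Lemma sqclass_nonsquareE rho : odd #|F| -> ~ (exists x, x ^+ 2 = rho) ->
  sqclass rho = [set~ 0] :\: sqclass 1.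
Proof.
move=> oddF rho_nsq; have rho_neq0 : rho != 0.
  by apply: contra_not_neq rho_nsq => ->; exists 0; rewrite expr0n.
have sq_neq0 r : r != 0 -> sqclass r \subset [set~ 0].
  by move=> r_neq0; apply/subsetP => _ /sqclassP [s s_neq0 ->]; rewrite !inE mulf_neq0 ?expf_neq0.
apply/eqP; rewrite eqEcard subsetD sq_neq0 //= disjoint_sym sqclass_disjoint //=.
rewrite cardsD (setIidPr (sq_neq0 _ (oner_neq0 F))) cardsC1 (card_sqclass rho_neq0).
by rewrite -(card_sqclass1 oddF) muln2 -addnn addnK.
Qed.

Lemma card_std_params r : r != 0 -> #|std_params r| = (#|F|.+1 * (#|F| * #|sqclass r|))%N.
Proof.
move=> r_neq0; pose g (u : option F * (F * F)) := (u.1, (u.2.1, u.2.2 - u.2.1 ^+ 2)).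
have g_inj : injective g.
  by move=> [t [x y]] [t' [x' y']] [-> -> /(congr1 (+%R^~ (x' ^+ 2)))]; rewrite !subrK => ->.
have -> : std_params r = g @^-1: setX [set: option F] (setX [set: F] (sqclass r)).
  by apply/setP => u; rewrite !inE.
by rewrite card_preimset // !cardsX !cardsT card_option.
Qed.

Lemma card_Gorbit_ell r : odd #|F| -> r != 0 -> #|Gorbit (ell r)| = ((#|F| ^ 3 - #|F|) %/ 2)%N.
Proof.
move=> oddF r_neq0; rewrite Gorbit_ell // card_in_imset.
  rewrite card_std_params // (card_sqclass r_neq0) cube_subn_half ?card_sqclass1 //.
  by apply/card_gt0P; exists 0.
move=> [t [x y]] [t' [x' y']]; rewrite !inE /std_line_of /= => /(sqclass_sub_neq r_neq0) y_neq.
by move=> /(sqclass_sub_neq r_neq0) y'_neq /(std_line_inj y_neq y'_neq) [-> -> ->].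
Qed.

Lemma UnGammaE rho : odd #|F| -> ~ (exists x, x ^+ 2 = rho) ->
  UnGamma F = Gorbit (ell 1) :|: Gorbit (ell rho).
Proof.
move=> oddF rho_nsq; have rho_neq0 : rho != 0.
  by apply: contra_not_neq rho_nsq => ->; exists 0; rewrite expr0n.
apply/setP => L; rewrite in_setU !Gorbit_ell ?oner_neq0 //; apply/idP/orP.
  case/UnGamma_std_line => t [x [y [y_neq ->]]].
  have [sq1|nsq1] := boolP (y - x ^+ 2 \in sqclass 1).
    by left; apply/imsetP; exists (t, (x, y)); rewrite ?inE.
  right; apply/imsetP; exists (t, (x, y)) => //.
  by rewrite inE /= sqclass_nonsquareE // in_setD nsq1 !inE subr_eq0.
by case=> /imsetP [[t [x y]] + ->]; rewrite inE /= => /sqclass_sub_neq y_neq;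
  apply: std_line_UnGamma; apply: y_neq; rewrite ?oner_neq0.
Qed.

Lemma disjoint_Gorbit_ell rho : ~ (exists x, x ^+ 2 = rho) ->
  [disjoint Gorbit (ell 1) & Gorbit (ell rho)].
Proof.
move=> rho_nsq; have rho_neq0 : rho != 0.
  by apply: contra_not_neq rho_nsq => ->; exists 0; rewrite expr0n.
rewrite !Gorbit_ell ?oner_neq0 //; apply/pred0P => L /=; apply/negP.
case/andP => /imsetP [[t [x y]] + ->] /imsetP [[t' [x' y']] +].
rewrite !inE /std_line_of /= => sq1 sqrho /esym /std_line_inj [] //.
- exact: sqclass_sub_neq sqrho.
- exact: sqclass_sub_neq (oner_neq0 F) sq1.
move=> _ ? ?; subst x' y'; have /pred0P/(_ (y - x ^+ 2)) := sqclass_disjoint rho_nsq.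
by rewrite /= sq1 sqrho.
Qed.

Lemma proj_of_diagd_inj e e' : proj_of (diagd e) = proj_of (diagd e') -> e = e'.
Proof.
move=> /(congr1 (fun f : {ffun 'M[F]_4 -> 'M[F]_4} => f <<rowv4 1 1 0 0>>%MS)).
rewrite !ffunE => /genmxP /andP [sub _].
rewrite !(eqmxMr _ (genmxE _)) !rowv4_mul !mxE /= in sub.
case/sub_rVP: sub => k /rowP k_eq; move: (k_eq 0) (k_eq 1); rewrite !mxE /=.
by rewrite !(mul1r, mul0r, mulr0, addr0, add0r, expr0) modn_small // !expr1 mulr1 => <-;
  rewrite mul1r.
Qed.

End TwistedCubicLines.

Theorem theorem6p7 (F : finFieldType) (rho : F) :
  odd #|F| -> (5 <= #|F|)%N ->
  ~ (exists x : F, x ^+ 2 = rho) ->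
  let P0 := rowv4 0 0 0 1 in
  let l1 := line_through P0 (rowv4 1 0 1 0) in
  let l2 := line_through P0 (rowv4 1 0 rho 0) in
  UnGamma F = Gorbit l1 :|: Gorbit l2 /\
  [disjoint Gorbit l1 & Gorbit l2] /\
  #|Gorbit l1| = ((#|F| ^ 3 - #|F|) %/ 2)%N /\
  #|Gorbit l2| = ((#|F| ^ 3 - #|F|) %/ 2)%N /\
  Gstab l1 = Gstab l2 /\
  #|Gstab l1| = 2%N /\
  (forall phi, phi \in Gstab l1 ->
        exists d : F, (d = 1 \/ d = -1) /\ phi = proj_of (diagd d)).
Proof.
(* [5 <= #|F|] is only needed in the paper to describe G_q by the matrices M(a,b,c,d),
   which [Gq] takes as its definition. *)
move=> oddF _ rho_nsq P0 l1 l2.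
have rho_neq0 : rho != 0 by apply: contra_not_neq rho_nsq => ->; exists 0; rewrite expr0n.
have -> : l1 = ell 1 by []; have -> : l2 = ell rho by [].
rewrite (UnGammaE oddF rho_nsq) !Gstab_ell ?oner_neq0 //.
split=> //; split; first exact: disjoint_Gorbit_ell.
split; first exact: card_Gorbit_ell (oner_neq0 F).
split; first exact: card_Gorbit_ell.
split=> //; split.
  rewrite cards2; suff -> : proj_of (diagd (1 : F)) != proj_of (diagd (-1)) by [].
  apply: contra_neq (natr2_neq0_odd_card oddF) => /proj_of_diagd_inj /eqP.
  by rewrite -addr_eq0 => /eqP.
by move=> phi; rewrite in_set2 => /orP [] /eqP ->; [exists 1 | exists (-1)]; split; auto.
Qed.
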